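(* Let $\Omega_1\subsetneq\Omega_2\subset\mathbb{C}$ and $Y\subsetneq\mathbb{C}$ be domains. Then $\mathscr{C}_{\Omega_2}^{Y,s}(w)\leq \mathscr{C}_{\Omega_1}^{Y,s}(w)$ for all $w\in\Omega_1$ and $s\in Y$.
   Context: $\mathbb{D}=\{z\in\mathbb{C}:|z|<1\}$. For domains $\Omega\subset\mathbb{C}$, $Y\subsetneq\mathbb{C}$, and points $w\in\Omega$, $s\in Y$, let $\mathcal{H}^s_w(\Omega,Y)$ be the set of holomorphic maps $h:\Omega\to Y$ with $h(w)=s$ and $h(z)\neq s$ for all $z\in\Omega\setminus\{w\}$. For a domain $Y\subsetneq\mathbb{C}$ and $v\in Y$, the Hurwitz density is $\eta_Y(v)=2/r_Y(v)$, where $r_Y(v)=\max\{h'(0): h:\mathbb{D}\to Y \text{ holomorphic},\ h(0)=v,\ h(z)\neq v \text{ for } z\in\mathbb{D}\setminus\{0\},\ h'(0)>0\}$. The Carathéodory density of the Hurwitz metric of $\Omega$ relative to $Y$ is $\mathscr{C}_{\Omega}^{Y,s}(w)=\sup\{\eta_Y(h(w))|h'(w)| : h\in\mathcal{H}^s_w(\Omega,Y)\}$, defined to be $0$ if $\mathcal{H}^s_w(\Omega,Y)=\emptyset$. *)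

(* MathComp-Analysis over R : realType, complex plane = R[i]
   (mathcomp-real-closed), holomorphy = complex differentiability, i.e.
   differentiability of h : R[i] -> R[i] viewed as a normed module over the
   numFieldType R[i] itself. *)
From HB Require Import structures.
From mathcomp Require Import all_boot all_order all_algebra.
From mathcomp Require Import all_classical all_reals all_analysis.
From mathcomp Require Import complex.
Set Implicit Arguments. Unset Strict Implicit. Unset Printing Implicit Defensive.
Import Order.TTheory GRing.Theory Num.Theory.
Import numFieldNormedType.Exports.
Local Open Scope classical_set_scope.
Local Open Scope ring_scope.
Local Open Scope complex_scope.

Section Defs.
Variable R : realType.
Local Notation C := (R[i])^o.

Definition domain (Om : set C) : Prop := [/\ Om !=set0, open Om & connected Om].

Definition disc : set C := [set z | `|z| < 1].

Definition holomorphic_on (Om : set C) (h : C -> C) : Prop :=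
  forall z, Om z -> derivable h z 1.

Definition Hcal (Om Y : set C) (w s : C) (h : C -> C) : Prop :=
  [/\ holomorphic_on Om h, (forall z, Om z -> Y (h z)), h w = s &
      forall z, Om z -> z <> w -> h z <> s].

Definition hurwitz_r (Y : set C) (v : C) : \bar R :=
  ereal_sup [set (complex.Re ('D_1 h 0))%:E | h in
     [set h | Hcal disc Y 0 v h /\ 0 < 'D_1 h 0]].

Definition hurwitz_eta (Y : set C) (v : C) : R := 2 / fine (hurwitz_r Y v).

Definition cara_hurwitz (Om Y : set C) (s w : C) : \bar R :=
  if pselect (exists h, Hcal Om Y w s h) is left _ then
    ereal_sup [set (hurwitz_eta Y (h w) * @Normc.normc R ('D_1 h w))%:E | h in Hcal Om Y w s]
  else 0%E.
End Defs.

(* Shrinking the source domain can only enlarge the admissible family: the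
   restriction to Om1 of any h in H^s_w(Om2, Y) lies in H^s_w(Om1, Y), with
   the same value h w and the same derivative at w.  Hence the supremum over
   Om1 is taken over a larger set and dominates the one over Om2; if
   H^s_w(Om2, Y) is empty, the density over Om2 is 0 and every density is
   nonnegative. *)
From HB Require Import structures.
From mathcomp Require Import all_boot all_order all_algebra.
From mathcomp Require Import all_classical all_reals all_analysis.
From mathcomp Require Import complex.
Import Order.TTheory GRing.Theory Num.Theory.
Import numFieldNormedType.Exports.
Local Open Scope classical_set_scope.
Local Open Scope ring_scope.

Lemma fine_ereal_sup_ge0 (R : realType) (S : set \bar R) :
  (forall x, S x -> (0 <= x)%E) -> 0 <= fine (ereal_sup S).
Proof.
move=> S_ge0; have [->|/set0P[x Sx]] := eqVneq S set0; first by rewrite ereal_sup0.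
exact/fine_ge0/(le_trans (S_ge0 x Sx))/ereal_sup_ubound.
Qed.

Section HurwitzDensities.
Variable R : realType.
Local Notation C := (R[i])^o.

Lemma hurwitz_eta_ge0 (Y : set C) (v : C) : 0 <= hurwitz_eta Y v.
Proof.
rewrite /hurwitz_eta divr_ge0 // fine_ereal_sup_ge0 // => _ [h [_ D_gt0] <-].
by move: D_gt0; rewrite ltcE lee_fin => /andP[_ /ltW].
Qed.

Lemma cara_hurwitz_ge0 (Om Y : set C) (s w : C) :
  (0 <= cara_hurwitz Om Y s w)%E.
Proof.
rewrite /cara_hurwitz; case: pselect => // -[h Hh].
apply: le_trans (ereal_sup_ubound _); last by exists h.
rewrite lee_fin mulr_ge0 ?hurwitz_eta_ge0 //.
by case: ('D_1 h w) => a b /=; apply: sqrtr_ge0.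
Qed.

Lemma Hcal_subset (Om1 Om2 Y : set C) (w s : C) (h : C -> C) :
  Om1 `<=` Om2 -> Hcal Om2 Y w s h -> Hcal Om1 Y w s h.
Proof.
move=> sub [h_hol h_Y h_w h_s]; split=> // z /sub; [exact: h_hol|exact: h_Y|].
exact: h_s.
Qed.

Lemma cara_hurwitz_le_subset (Om1 Om2 Y : set C) (s w : C) :
  Om1 `<=` Om2 -> (cara_hurwitz Om2 Y s w <= cara_hurwitz Om1 Y s w)%E.
Proof.
move=> sub; rewrite {1}/cara_hurwitz; case: pselect => [[h Hh]|_].
- rewrite /cara_hurwitz; case: pselect => [_|[]]; last first.
    by exists h; exact: Hcal_subset Hh.
  by apply: ereal_sup_le => _ [g Hg <-]; exists g => //; exact: Hcal_subset Hg.
- exact: cara_hurwitz_ge0.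
Qed.

End HurwitzDensities.

Theorem corollary3p13 (R : realType) (Om1 Om2 Y : set (R[i])^o) :
  domain Om1 -> domain Om2 -> Om1 `<` Om2 ->
  domain Y -> Y != setT ->
  forall w s : (R[i])^o, Om1 w -> Y s ->
  (cara_hurwitz Om2 Y s w <= cara_hurwitz Om1 Y s w)%E.
Proof.
move=> _ _ /properW sub _ _ w s _ _.
exact: cara_hurwitz_le_subset.
Qed.
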